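(* Let $\nu\ge0$, $\epsilon\in\{0,1\}$, $\zeta$ real with $1+\zeta\nu^2\neq0$. For every smooth solution $U(X,T)$ of $$-2\nu^2U_XU_{XX}+3\epsilon U_XU-\nu^2U_{XXX}U+\tfrac23U_{XXX}-\tfrac23\nu^{5/2}U_{XXX}+\epsilon U_T-\nu^2U_{XXT}=0,$$ the Pfaffian system for $\gamma(X,T)$ $$-\gamma_X=\frac{3}{4(1+\zeta\nu^2)}\gamma^2-\Big(\nu^2U_{XX}-\epsilon U+\tfrac13\epsilon(\zeta+\sqrt\nu)\Big),$$ $$-\gamma_T=\frac{1}{2(1+\zeta\nu^2)}\Big(-\tfrac32U-\zeta-\sqrt\nu\Big)\gamma^2+U_X\gamma+U(\nu^2U_{XX}-\epsilon U)+\tfrac23(\nu^{5/2}-1)U_{XX}-\tfrac13\epsilon(\zeta+\sqrt\nu)U+\tfrac29\epsilon(\zeta^2+2\sqrt\nu\zeta+\nu)$$ is completely integrable; i.e. $\gamma$ is a quadratic pseudo-potential of this equation.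
   Context: A real function $\Gamma$ is a pseudo-potential of an equation if there are smooth functions $f,g$ of $\Gamma$, the independent variables, $U$ and finitely many derivatives of $U$ such that $\Omega_\Gamma=d\Gamma-(f\,dX+g\,dT)$ satisfies $d\Omega_\Gamma\equiv0\bmod\Omega_\Gamma$ on every solution; it is quadratic if $f,g$ are polynomials of degree at most two in $\Gamma$. *)

From Stdlib Require Import Reals List.
From Coquelicot Require Import Coquelicot.
Open Scope R_scope.

Definition dX (F : R -> R -> R) : R -> R -> R :=
  fun x t => Derive (fun y => F y t) x.
Definition dT (F : R -> R -> R) : R -> R -> R :=
  fun x t => Derive (fun s => F x s) t.

(* Iterated partial derivatives: true = d/dX, false = d/dT (applied right to left). *)
Fixpoint iterD (w : list bool) (F : R -> R -> R) : R -> R -> R :=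
  match w with
  | nil => F
  | b :: w' => (if b then dX else dT) (iterD w' F)
  end.

Definition smooth2 (F : R -> R -> R) : Prop :=
  forall (w : list bool) (x t : R),
    ex_derive (fun y => iterD w F y t) x /\
    ex_derive (fun s => iterD w F x s) t /\
    continuous (fun p : R * R => iterD w F (fst p) (snd p)) (x, t).

Definition is_solution (nu eps : R) (U : R -> R -> R) : Prop :=
  forall x t : R,
    let Ux := dX U x t in
    let Uxx := dX (dX U) x t in
    let Uxxx := dX (dX (dX U)) x t in
    let Ut := dT U x t in
    let Uxxt := dT (dX (dX U)) x t in
    - 2 * nu ^ 2 * Ux * Uxx + 3 * eps * Ux * U x t - nu ^ 2 * Uxxx * U x t
    + 2 / 3 * Uxxx - 2 / 3 * (nu ^ 2 * sqrt nu) * Uxxx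
    + eps * Ut - nu ^ 2 * Uxxt = 0.

(* Right-hand sides f, g of gamma_X = f, gamma_T = g, as functions of
   (gamma, X, T) along the solution U. *)
Definition pf_f (nu eps zeta : R) (U : R -> R -> R) (c x t : R) : R :=
  - (3 / (4 * (1 + zeta * nu ^ 2)) * c ^ 2
     - (nu ^ 2 * dX (dX U) x t - eps * U x t + 1 / 3 * eps * (zeta + sqrt nu))).

Definition pf_g (nu eps zeta : R) (U : R -> R -> R) (c x t : R) : R :=
  - (1 / (2 * (1 + zeta * nu ^ 2)) * (- 3 / 2 * U x t - zeta - sqrt nu) * c ^ 2
     + dX U x t * c
     + U x t * (nu ^ 2 * dX (dX U) x t - eps * U x t)
     + 2 / 3 * (nu ^ 2 * sqrt nu - 1) * dX (dX U) x t
     - 1 / 3 * eps * (zeta + sqrt nu) * U x t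
     + 2 / 9 * eps * (zeta ^ 2 + 2 * sqrt nu * zeta + nu)).

(* Omega = dgamma - (f dX + g dT); dOmega = (f_T + f_gamma g - g_X - g_gamma f) dX/\dT
   mod Omega, so dOmega == 0 mod Omega iff this coefficient vanishes identically. *)
Definition pfaff_integrable (f g : R -> R -> R -> R) : Prop :=
  forall c x t : R,
    Derive (fun s => f c x s) t + Derive (fun c' => f c' x t) c * g c x t
    = Derive (fun y => g c y t) x + Derive (fun c' => g c' x t) c * f c x t.

(* The compatibility coefficient f_T + f_gamma g - g_X - g_gamma f of the Pfaffian
   system is a polynomial in gamma and the jet of U.  Its gamma^2 and gamma terms cancel
   identically, and its gamma-free part is minus the left-hand side of the equation once
   (sqrt nu)^2 = nu is used, so it vanishes on solutions. *)
From Stdlib Require Import Reals List.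
From Coquelicot Require Import Coquelicot.
Open Scope R_scope.

Section PseudoPotentialDerivatives.

Variables (nu eps zeta : R) (U : R -> R -> R).
Hypothesis one_plus_zeta_nu2_neq0 : 1 + zeta * nu ^ 2 <> 0.

Lemma pf_f_dT (c x t : R) :
  ex_derive (fun s => U x s) t ->
  ex_derive (fun s => dX (dX U) x s) t ->
  Derive (fun s => pf_f nu eps zeta U c x s) t
  = nu ^ 2 * dT (dX (dX U)) x t - eps * dT U x t.
Proof.
  intros HU HUxx; apply is_derive_unique; unfold pf_f.
  auto_derive; auto.
  unfold dT; ring.
Qed.

Lemma pf_f_dgamma (c x t : R) :
  Derive (fun c' => pf_f nu eps zeta U c' x t) c
  = - (3 / (4 * (1 + zeta * nu ^ 2)) * (2 * c)).
Proof.
  apply is_derive_unique; unfold pf_f.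
  auto_derive; auto.
  field; auto.
Qed.

Lemma pf_g_dgamma (c x t : R) :
  Derive (fun c' => pf_g nu eps zeta U c' x t) c
  = - (1 / (2 * (1 + zeta * nu ^ 2)) * (- 3 / 2 * U x t - zeta - sqrt nu) * (2 * c)
       + dX U x t).
Proof.
  apply is_derive_unique; unfold pf_g.
  auto_derive; auto.
  field; auto.
Qed.

Lemma pf_g_dX (c x t : R) :
  ex_derive (fun y => U y t) x ->
  ex_derive (fun y => dX U y t) x ->
  ex_derive (fun y => dX (dX U) y t) x ->
  Derive (fun y => pf_g nu eps zeta U c y t) x
  = - (1 / (2 * (1 + zeta * nu ^ 2)) * (- 3 / 2 * dX U x t) * c ^ 2
       + dX (dX U) x t * c
       + dX U x t * (nu ^ 2 * dX (dX U) x t - eps * U x t)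
       + U x t * (nu ^ 2 * dX (dX (dX U)) x t - eps * dX U x t)
       + 2 / 3 * (nu ^ 2 * sqrt nu - 1) * dX (dX (dX U)) x t
       - 1 / 3 * eps * (zeta + sqrt nu) * dX U x t).
Proof.
  intros HU HUx HUxx; apply is_derive_unique; unfold pf_g.
  auto_derive; [unfold dX in *; tauto |].
  unfold dX; field; auto.
Qed.

End PseudoPotentialDerivatives.

(* The jet variables u, Ux, Uxx, Uxxx, Ut, Uxxt stand for U and its derivatives at a
   point, and s for sqrt nu. *)
Lemma compatibility_defect_eq (nu s eps zeta c u Ux Uxx Uxxx Ut Uxxt : R) :
  s * s = nu ->
  1 + zeta * nu ^ 2 <> 0 ->
  let a := 1 + zeta * nu ^ 2 in
  let f := - (3 / (4 * a) * c ^ 2 - (nu ^ 2 * Uxx - eps * u + 1 / 3 * eps * (zeta + s))) in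
  let g := - (1 / (2 * a) * (- 3 / 2 * u - zeta - s) * c ^ 2 + Ux * c
              + u * (nu ^ 2 * Uxx - eps * u) + 2 / 3 * (nu ^ 2 * s - 1) * Uxx
              - 1 / 3 * eps * (zeta + s) * u
              + 2 / 9 * eps * (zeta ^ 2 + 2 * s * zeta + nu)) in
  (nu ^ 2 * Uxxt - eps * Ut) + - (3 / (4 * a) * (2 * c)) * g
  - (- (1 / (2 * a) * (- 3 / 2 * Ux) * c ^ 2 + Uxx * c
        + Ux * (nu ^ 2 * Uxx - eps * u) + u * (nu ^ 2 * Uxxx - eps * Ux)
        + 2 / 3 * (nu ^ 2 * s - 1) * Uxxx - 1 / 3 * eps * (zeta + s) * Ux)
     + - (1 / (2 * a) * (- 3 / 2 * u - zeta - s) * (2 * c) + Ux) * f)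
  = - (- 2 * nu ^ 2 * Ux * Uxx + 3 * eps * Ux * u - nu ^ 2 * Uxxx * u
       + 2 / 3 * Uxxx - 2 / 3 * (nu ^ 2 * s) * Uxxx + eps * Ut - nu ^ 2 * Uxxt).
Proof.
  intros <- Ha a f g; subst a f g.
  field; auto.
Qed.

Theorem corollary3 (nu eps zeta : R) (U : R -> R -> R) :
  0 <= nu ->
  (eps = 0 \/ eps = 1) ->
  1 + zeta * nu ^ 2 <> 0 ->
  smooth2 U ->
  is_solution nu eps U ->
  pfaff_integrable (pf_f nu eps zeta U) (pf_g nu eps zeta U).
Proof.
  intros Hnu _ Ha Hs Hsol c x t.
  destruct (Hs nil x t) as [HU [HUt _]].
  destruct (Hs (true :: nil) x t) as [HUx _].
  destruct (Hs (true :: true :: nil) x t) as [HUxx [HUxxt _]].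
  simpl in HU, HUt, HUx, HUxx, HUxxt.
  rewrite pf_f_dT, pf_f_dgamma, pf_g_dgamma, pf_g_dX by auto.
  apply Rminus_diag_uniq.
  unfold pf_f, pf_g.
  rewrite compatibility_defect_eq by (auto using sqrt_sqrt).
  rewrite (Hsol x t); ring.
Qed.
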